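(* Let $A$ be a cirquent and let $B$ be a purification of $A$ (a final output of the Purification procedure applied to $A$). Then: (1) if $B$ is provable in $\mathbf{CL16}$, then so is $A$; (2) $A$ is valid iff $B$ is valid; (3) $B$ is pure; (4) $\overline{B}\le\overline{A}$.
   Context: Cirquents. Fix elementary letters $p,q,\dots$; literals are $p$ and $\neg p$. Fix disjoint infinite sets of disjunctive and conjunctive clusters. Cirquents: $\top,\bot$ and literals; if $A,B$ are cirquents then so are $A\vee B$, $A\wedge B$, $A\sqcap^cB$ ($c$ conjunctive), $A\sqcup^cB$ ($c$ disjunctive). A cluster $c$ occurs in a cirquent if some $\sqcup^c$ or $\sqcap^c$ occurs in it. A surface occurrence is one not in the scope of any choice connective. Semantics and validity. LegRuns is the set of (finite or infinite) sequences of labeled moves (each labeled $\top$ = machine or $\bot$ = environment) in which every move is $c.0$ or $c.1$ for a cluster $c$, moves in disjunctive clusters are $\top$-labeled, moves in conjunctive clusters are $\bot$-labeled, and each cluster has at most one move. For $\Gamma\in$ LegRuns, $A\sqcup^cB$ or $A\sqcap^cB$ is resolved if $\Gamma$ contains $c.0$ or $c.1$, with resolvent $A$ or $B$. An interpretation $^*$ assigns each letter a value in $\{\top,\bot\}$. $C^*$ is the game with legal runs LegRuns, a legal run $\Gamma$ being won by $\top$ iff: $C=\top$; or $C$ is $p$ (resp. $\neg p$) with $p^*=\top$ (resp. $\bot$); or $C=A_0\vee A_1$ and $\Gamma$ is won in some $A_i$; or $C=A_0\wedge A_1$ and won in both; or $C=A_0\sqcup^cA_1$ is resolved and $\Gamma$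 is won in the resolvent; or $C=A_0\sqcap^cA_1$ and it is unresolved or $\Gamma$ is won in the resolvent. Illegal runs are lost by the player who made the first illegal move. An HPM is a Turing machine with an extra read-only run tape showing the current run, able to make moves, against an environment that may move at any time; it solves a game if all runs it generates are won by $\top$. $C$ is valid if one HPM solves $C^*$ for all interpretations $^*$. Rules of $\mathbf{CL16}$ (premise(s) $\leadsto$ conclusion; $X[E_1,\dots,E_n]$ denotes a cirquent with fixed subcirquents $E_i$, $X[F_1,\dots,F_n]$ replaces all occurrences of the $E_i$ by the $F_i$, the conclusion setting the context): Commutativity $X[B\vee A]\leadsto X[A\vee B]$, $X[B\wedge A]\leadsto X[A\wedge B]$; Associativity $X[A\vee(B\vee C)]\leadsto X[(A\vee B)\vee C]$, $X[A\wedge(B\wedge C)]\leadsto X[(A\wedge B)\wedge C]$; Identity $X[A]\leadsto X[A\vee\bot]$, $X[A]\leadsto X[A\wedge\top]$; Domination $X[\top]\leadsto X[A\vee\top]$, $X[\bot]\leadsto X[A\wedge\bot]$; Choosing $X[A_1,\dots,A_n]\leadsto X[A_1\sqcup^cB_1,\dots,A_n\sqcup^cB_n]$ and $X[B_1,\dots,B_n]\leadsto X[A_1\sqcup^cB_1,\dots,A_n\sqcup^cB_n]$ where the $A_i\sqcup^cB_i$ are all $\sqcup^c$-rooted subcirquents of the conclusion; Cleansing $X[Y[A]\sqcap^cC]\leadsto X[Y[A\sqcap^cB]\sqcap^cC]$, $X[C\sqcap^cY[B]]\leadsto X[C\sqcap^cY[A\sqcap^cB]]$; Distribution $X[(A\vee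 C)\wedge(B\vee C)]\leadsto X[(A\wedge B)\vee C]$, $X[(A\vee C)\sqcap^c(B\vee C)]\leadsto X[(A\sqcap^cB)\vee C]$; Trivialization $X[\top]\leadsto X[\neg p\vee p]$; Quadrilemma $X\big[\big((A\wedge(C\sqcap^bD))\sqcap^a(B\wedge(C\sqcap^bD))\big)\sqcap^c\big(((A\sqcap^aB)\wedge C)\sqcap^b((A\sqcap^aB)\wedge D)\big)\big]\leadsto X[(A\sqcap^aB)\wedge(C\sqcap^bD)]$ with $c$ not in the conclusion; Splitting $A,\ B\leadsto A\sqcap^cB$ with $c$ in neither $A$ nor $B$. A proof of $C$ is a sequence $C_1=\top,\dots,C_n=C$ each of whose members after the first follows from earlier ones by a rule. Rank: tetration ${}^1a=a$, ${}^{n+1}a=a^{({}^na)}$; $\overline{C}=1$ for $\top,\bot$, literals; $\overline{A\sqcup^cB}=\overline{A\sqcap^cB}=\overline{A}+\overline{B}$; $\overline{A\wedge B}=5^{\overline{A}+\overline{B}}$; $\overline{A\vee B}={}^{(\overline{A}+\overline{B})}5$. Pure: a cirquent $D$ is pure iff (1) $D$ has no surface occurrence of $\bot$ unless $D=\bot$; (2) no surface occurrence of $\wedge$ is in the scope of $\vee$; (3) no surface occurrence of any $\sqcap^c$ is in the scope of $\vee$; (4) there is no surface occurrence of $A_1\vee\dots\vee A_n$ with both $p$ and $\neg p$ among $A_1,\dots,A_n$ for some letter $p$; (5) no surface occurrence of $\top$ unless $D=\top$; (6) if $D$ is $A_1\wedge\dots\wedge A_n$ ($n\ge2$, any bracketing)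 then some $A_i$ is not of the form $B\sqcap^cC$; (7) if $D$ is $A\sqcap^cB$ then neither $A$ nor $B$ contains $c$. Purification procedure applied to $D$: Stages 1–7 in order, each a loop iterated until it no longer modifies $D$; the final $D$ is returned. Stage 1: a surface occurrence of $\bot\vee A$ or $A\vee\bot$ is changed to $A$; next, of $\bot\wedge A$ or $A\wedge\bot$ to $\bot$. Stage 2: a surface occurrence of $(A\wedge B)\vee C$ or $C\vee(A\wedge B)$ is changed to $(A\vee C)\wedge(B\vee C)$. Stage 3: a surface occurrence of $(A\sqcap^cB)\vee C$ or $C\vee(A\sqcap^cB)$ is changed to $(A\vee C)\sqcap^c(B\vee C)$. Stage 4: a surface occurrence of $A_1\vee\dots\vee A_n$ with both $p,\neg p$ among the $A_i$ is changed to $\top$. Stage 5: a surface occurrence of $\top\vee A$ or $A\vee\top$ is changed to $\top$; next, of $\top\wedge A$ or $A\wedge\top$ to $A$. Stage 6: a surface occurrence of $(A\sqcap^aB)\wedge(E\sqcap^bF)$ is changed to $\big((A\wedge(E\sqcap^bF))\sqcap^a(B\wedge(E\sqcap^bF))\big)\sqcap^c\big(((A\sqcap^aB)\wedge E)\sqcap^b((A\sqcap^aB)\wedge F)\big)$ with $c$ a conjunctive cluster not occurring in $D$. Stage 7: if $D$ is $X[E\sqcap^cF]\sqcap^cA$ (resp. $A\sqcap^cX[E\sqcap^cF]$), change it to $X[E]\sqcap^cA$ (resp. $A\sqcap^cX[F]$). *)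

From Stdlib Require Import List Arith PeanoNat.
Import ListNotations.

Inductive cluster : Type := CConj (n : nat) | CDisj (n : nat).

(* Letters are natural numbers.
   [CCap c A B] is  A ⊓^c B  where c denotes the conjunctive cluster [CConj c];
   [CCup c A B] is  A ⊔^c B  where c denotes the disjunctive cluster [CDisj c]. *)
Inductive cirq : Type :=
| CTop | CBot
| CPos (p : nat)
| CNeg (p : nat)
| COr  (A B : cirq)
| CAnd (A B : cirq)
| CCap (c : nat) (A B : cirq)
| CCup (c : nat) (A B : cirq).

Fixpoint occurs (k : cluster) (C : cirq) : Prop :=
  match C with
  | COr A B | CAnd A B => occurs k A \/ occurs k B
  | CCap c A B => k = CConj c \/ occurs k A \/ occurs k B
  | CCup c A B => k = CDisj c \/ occurs k A \/ occurs k B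
  | _ => False
  end.

Inductive ctx : Type :=
| Hole
| XOrL (X : ctx) (B : cirq) | XOrR (A : cirq) (X : ctx)
| XAndL (X : ctx) (B : cirq) | XAndR (A : cirq) (X : ctx)
| XCapL (c : nat) (X : ctx) (B : cirq) | XCapR (c : nat) (A : cirq) (X : ctx)
| XCupL (c : nat) (X : ctx) (B : cirq) | XCupR (c : nat) (A : cirq) (X : ctx).

Fixpoint plug (X : ctx) (E : cirq) : cirq :=
  match X with
  | Hole => E
  | XOrL X B => COr (plug X E) B
  | XOrR A X => COr A (plug X E)
  | XAndL X B => CAnd (plug X E) B
  | XAndR A X => CAnd A (plug X E)
  | XCapL c X B => CCap c (plug X E) B
  | XCapR c A X => CCap c A (plug X E)
  | XCupL c X B => CCup c (plug X E) B
  | XCupR c A X => CCup c A (plug X E)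
  end.

Fixpoint surface_ctx (X : ctx) : Prop :=
  match X with
  | Hole => True
  | XOrL X _ | XOrR _ X | XAndL X _ | XAndR _ X => surface_ctx X
  | _ => False
  end.

Fixpoint choose (c : nat) (b : bool) (C : cirq) : cirq :=
  match C with
  | COr A B => COr (choose c b A) (choose c b B)
  | CAnd A B => CAnd (choose c b A) (choose c b B)
  | CCap d A B => CCap d (choose c b A) (choose c b B)
  | CCup d A B =>
      if Nat.eqb d c then choose c b (if b then B else A)
      else CCup d (choose c b A) (choose c b B)
  | _ => C
  end.

Definition quad (a b c : nat) (A B C D : cirq) : cirq :=
  CCap c (CCap a (CAnd A (CCap b C D)) (CAnd B (CCap b C D)))
         (CCap b (CAnd (CCap a A B) C) (CAnd (CCap a A B) D)).

(* One-premise rules of CL16: [rule1 P C] means premise P ⤳ conclusion C. *)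
Inductive rule1 : cirq -> cirq -> Prop :=
| r_comm_or X A B : rule1 (plug X (COr B A)) (plug X (COr A B))
| r_comm_and X A B : rule1 (plug X (CAnd B A)) (plug X (CAnd A B))
| r_assoc_or X A B C :
    rule1 (plug X (COr A (COr B C))) (plug X (COr (COr A B) C))
| r_assoc_and X A B C :
    rule1 (plug X (CAnd A (CAnd B C))) (plug X (CAnd (CAnd A B) C))
| r_id_or X A : rule1 (plug X A) (plug X (COr A CBot))
| r_id_and X A : rule1 (plug X A) (plug X (CAnd A CTop))
| r_dom_or X A : rule1 (plug X CTop) (plug X (COr A CTop))
| r_dom_and X A : rule1 (plug X CBot) (plug X (CAnd A CBot))
| r_choose c b C : occurs (CDisj c) C -> rule1 (choose c b C) C
| r_cleanse_l X Y c A B C :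
    rule1 (plug X (CCap c (plug Y A) C)) (plug X (CCap c (plug Y (CCap c A B)) C))
| r_cleanse_r X Y c A B C :
    rule1 (plug X (CCap c C (plug Y B))) (plug X (CCap c C (plug Y (CCap c A B))))
| r_distr_and X A B C :
    rule1 (plug X (CAnd (COr A C) (COr B C))) (plug X (COr (CAnd A B) C))
| r_distr_cap X c A B C :
    rule1 (plug X (CCap c (COr A C) (COr B C))) (plug X (COr (CCap c A B) C))
| r_triv X p : rule1 (plug X CTop) (plug X (COr (CNeg p) (CPos p)))
| r_quad X a b c A B C D :
    ~ occurs (CConj c) (plug X (CAnd (CCap a A B) (CCap b C D))) ->
    rule1 (plug X (quad a b c A B C D)) (plug X (CAnd (CCap a A B) (CCap b C D))).

Inductive provable : cirq -> Prop :=
| prov_top : provable CTop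
| prov_rule P C : provable P -> rule1 P C -> provable C
| prov_split c A B :
    provable A -> provable B -> ~ occurs (CConj c) A -> ~ occurs (CConj c) B ->
    provable (CCap c A B).

Definition move : Type := (cluster * bool)%type.          (* c.0 = (c,false), c.1 = (c,true) *)
Definition lmove : Type := (bool * move)%type.            (* label: true = ⊤, false = ⊥ *)

Definition lmove_legal (m : lmove) : Prop :=
  match m with
  | (true, (CDisj _, _)) => True
  | (false, (CConj _, _)) => True
  | _ => False
  end.

Definition legal (L : list lmove) : Prop :=
  Forall lmove_legal L /\ NoDup (map (fun m : lmove => fst (snd m)) L).

(* winning a legal run, given which moves the run contains *)
Fixpoint wins (has : cluster -> bool -> Prop) (i : nat -> bool) (C : cirq) : Prop :=
  match C with
  | CTop => True
  | CBot => False
  | CPos p => i p = true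
  | CNeg p => i p = false
  | COr A B => wins has i A \/ wins has i B
  | CAnd A B => wins has i A /\ wins has i B
  | CCup c A B =>
      (has (CDisj c) false /\ wins has i A) \/ (has (CDisj c) true /\ wins has i B)
  | CCap c A B =>
      (~ has (CConj c) false /\ ~ has (CConj c) true)
      \/ (has (CConj c) false /\ wins has i A) \/ (has (CConj c) true /\ wins has i B)
  end.

(* Abstract HPM: at round r, seeing the current run, it may make one move. *)
Definition machine : Type := nat -> list lmove -> option move.
(* Environment: at round r it makes a finite list of moves. *)
Definition envir : Type := nat -> list move.

Fixpoint run_upto (M : machine) (e : envir) (r : nat) : list lmove :=
  match r with
  | 0 => []
  | S r' =>
      let p := run_upto M e r' ++ map (fun m => (false, m)) (e r') in
      p ++ match M r' p with Some m => [(true, m)] | None => [] end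
  end.

Definition run_prefix (M : machine) (e : envir) (L : list lmove) : Prop :=
  exists r s, L ++ s = run_upto M e r.

Definition in_run (M : machine) (e : envir) (c : cluster) (b : bool) : Prop :=
  exists L l, run_prefix M e L /\ In (l, (c, b)) L.

Definition top_wins (i : nat -> bool) (C : cirq) (M : machine) (e : envir) : Prop :=
  (exists L x, run_prefix M e (L ++ [x]) /\ legal L /\ ~ legal (L ++ [x]) /\ fst x = false)
  \/ ((forall L, run_prefix M e L -> legal L) /\ wins (in_run M e) i C).

Definition valid (C : cirq) : Prop :=
  exists M : machine, forall (i : nat -> bool) (e : envir), top_wins i C M e.

Fixpoint tet (n a : nat) : nat :=
  match n with 0 => 1 | S m => a ^ tet m a end.

Fixpoint rank (C : cirq) : nat :=
  match C with
  | CCap _ A B | CCup _ A B => rank A + rank B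
  | CAnd A B => 5 ^ (rank A + rank B)
  | COr A B => tet (rank A + rank B) 5
  | _ => 1
  end.

Fixpoint surf (P : cirq -> Prop) (D : cirq) : Prop :=
  P D \/ match D with COr A B | CAnd A B => surf P A \/ surf P B | _ => False end.

(* L is one of the disjuncts A_i of some bracketing E = A_1 ∨ ... ∨ A_n *)
Fixpoint disj_has (E L : cirq) : Prop :=
  E = L \/ match E with COr A B => disj_has A L \/ disj_has B L | _ => False end.

Definition is_and (E : cirq) : Prop := match E with CAnd _ _ => True | _ => False end.
Definition is_cap (E : cirq) : Prop := match E with CCap _ _ _ => True | _ => False end.

(* E = A_1 ∧ ... ∧ A_n (n >= 1) with every A_i ⊓-rooted *)
Fixpoint conj_all_cap (E : cirq) : Prop :=
  match E with
  | CCap _ _ _ => True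
  | CAnd A B => conj_all_cap A /\ conj_all_cap B
  | _ => False
  end.

Definition pure (D : cirq) : Prop :=
  (D <> CBot -> ~ surf (fun E => E = CBot) D)
  /\ ~ surf (fun E => match E with COr A B => surf is_and A \/ surf is_and B | _ => False end) D
  /\ ~ surf (fun E => match E with COr A B => surf is_cap A \/ surf is_cap B | _ => False end) D
  /\ ~ surf (fun E => exists p, disj_has E (CPos p) /\ disj_has E (CNeg p)) D
  /\ (D <> CTop -> ~ surf (fun E => E = CTop) D)
  /\ (forall A B, D = CAnd A B -> ~ (conj_all_cap A /\ conj_all_cap B))
  /\ (forall c A B, D = CCap c A B -> ~ occurs (CConj c) A /\ ~ occurs (CConj c) B).

Definition surf_change (pat : cirq -> cirq -> Prop) (D D' : cirq) : Prop :=
  exists X E E', surface_ctx X /\ pat E E' /\ D = plug X E /\ D' = plug X E'.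

Definition s1a := surf_change (fun E E' => exists A, (E = COr CBot A \/ E = COr A CBot) /\ E' = A).
Definition s1b := surf_change (fun E E' => exists A, (E = CAnd CBot A \/ E = CAnd A CBot) /\ E' = CBot).
Definition s2 := surf_change (fun E E' => exists A B C,
  (E = COr (CAnd A B) C \/ E = COr C (CAnd A B)) /\ E' = CAnd (COr A C) (COr B C)).
Definition s3 := surf_change (fun E E' => exists c A B C,
  (E = COr (CCap c A B) C \/ E = COr C (CCap c A B)) /\ E' = CCap c (COr A C) (COr B C)).
Definition s4 := surf_change (fun E E' =>
  (exists p, disj_has E (CPos p) /\ disj_has E (CNeg p)) /\ E' = CTop).
Definition s5a := surf_change (fun E E' => exists A, (E = COr CTop A \/ E = COr A CTop) /\ E' = CTop).
Definition s5b := surf_change (fun E E' => exists A, (E = CAnd CTop A \/ E = CAnd A CTop) /\ E' = A).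
Definition s6 (D D' : cirq) : Prop :=
  exists c, ~ occurs (CConj c) D /\
  surf_change (fun E E' => exists a b A B E1 F1,
     E = CAnd (CCap a A B) (CCap b E1 F1) /\ E' = quad a b c A B E1 F1) D D'.
Definition s7 (D D' : cirq) : Prop :=
  exists X c E F A,
    (D = CCap c (plug X (CCap c E F)) A /\ D' = CCap c (plug X E) A)
    \/ (D = CCap c A (plug X (CCap c E F)) /\ D' = CCap c A (plug X F)).

Definition opt (s : cirq -> cirq -> Prop) (D D' : cirq) : Prop :=
  s D D' \/ ((forall D'', ~ s D D'') /\ D' = D).

Definition iter2 (s t : cirq -> cirq -> Prop) (D D' : cirq) : Prop :=
  exists D1, opt s D D1 /\ opt t D1 D'.

Inductive loop (it : cirq -> cirq -> Prop) : cirq -> cirq -> Prop :=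
| loop_done D : it D D -> loop it D D
| loop_step D D1 D2 : it D D1 -> D1 <> D -> loop it D1 D2 -> loop it D D2.

Definition purification (A B : cirq) : Prop :=
  exists D1 D2 D3 D4 D5 D6,
    loop (iter2 s1a s1b) A D1 /\ loop (opt s2) D1 D2 /\ loop (opt s3) D2 D3 /\
    loop (opt s4) D3 D4 /\ loop (iter2 s5a s5b) D4 D5 /\ loop (opt s6) D5 D6 /\
    loop (opt s7) D6 B.

(* Each elementary step of the procedure turns D into a D' such that D follows
   from D' in CL16 (by the rule the step inverts, or, for Stage 4, by a short
   derivation from ⊤), D is valid iff D' is, and the rank does not grow.  Apart
   from Quadrilemma, every step is a rewrite that preserves winning on every
   legal run (for Stage 7 because a legal run moves at most once in a cluster),
   so the same machine works for D and D'.  For Quadrilemma, a machine for the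
   premise is turned into one for the conclusion by running it against a
   simulated environment.  A stage stops only when its redexes are gone, which
   yields the matching purity condition, and later stages preserve the
   conditions established earlier; Stage 7 either changes nothing or leaves a
   ⊓-rooted cirquent, for which the first six conditions are trivial. *)

From Stdlib Require Import List PeanoNat Lia Classical Bool.
Import ListNotations.

(** * Contexts and sizes *)

Fixpoint ctx_comp (X Y : ctx) : ctx :=
  match X with
  | Hole => Y
  | XOrL X B => XOrL (ctx_comp X Y) B
  | XOrR A X => XOrR A (ctx_comp X Y)
  | XAndL X B => XAndL (ctx_comp X Y) B
  | XAndR A X => XAndR A (ctx_comp X Y)
  | XCapL c X B => XCapL c (ctx_comp X Y) B
  | XCapR c A X => XCapR c A (ctx_comp X Y)
  | XCupL c X B => XCupL c (ctx_comp X Y) B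
  | XCupR c A X => XCupR c A (ctx_comp X Y)
  end.

Lemma plug_comp X Y E : plug (ctx_comp X Y) E = plug X (plug Y E).
Proof. induction X; simpl; congruence. Qed.

Lemma surface_ctx_comp X Y : surface_ctx X -> surface_ctx Y -> surface_ctx (ctx_comp X Y).
Proof. induction X; simpl; tauto. Qed.

Lemma occurs_plug k X E : occurs k E -> occurs k (plug X E).
Proof. induction X; simpl; tauto. Qed.

Lemma occurs_cap_inv c A :
  occurs (CConj c) A -> exists X E F, A = plug X (CCap c E F).
Proof.
  induction A as [| | | |A1 IH1 A2 IH2|A1 IH1 A2 IH2|d A1 IH1 A2 IH2|d A1 IH1 A2 IH2];
    simpl; intros H; try contradiction.
  - destruct H as [H|H]; [destruct (IH1 H) as (X & E & F & ->); exists (XOrL X A2)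
                         |destruct (IH2 H) as (X & E & F & ->); exists (XOrR A1 X)];
      do 2 eexists; reflexivity.
  - destruct H as [H|H]; [destruct (IH1 H) as (X & E & F & ->); exists (XAndL X A2)
                         |destruct (IH2 H) as (X & E & F & ->); exists (XAndR A1 X)];
      do 2 eexists; reflexivity.
  - destruct H as [H|[H|H]].
    + injection H as ->. exists Hole; do 2 eexists; reflexivity.
    + destruct (IH1 H) as (X & E & F & ->). exists (XCapL d X A2); do 2 eexists; reflexivity.
    + destruct (IH2 H) as (X & E & F & ->). exists (XCapR d A1 X); do 2 eexists; reflexivity.
  - destruct H as [H|[H|H]]; [discriminate| |].
    + destruct (IH1 H) as (X & E & F & ->). exists (XCupL d X A2); do 2 eexists; reflexivity.
    + destruct (IH2 H) as (X & E & F & ->). exists (XCupR d A1 X); do 2 eexists; reflexivity.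
Qed.

Fixpoint max_conj (C : cirq) : nat :=
  match C with
  | COr A B | CAnd A B | CCup _ A B => Nat.max (max_conj A) (max_conj B)
  | CCap c A B => Nat.max c (Nat.max (max_conj A) (max_conj B))
  | _ => 0
  end.

Lemma occurs_conj_le_max c C : occurs (CConj c) C -> c <= max_conj C.
Proof.
  induction C; simpl; intros H; try contradiction;
    repeat match goal with H : _ \/ _ |- _ => destruct H as [H|H] end;
    try discriminate;
    try (injection H as ->); try (specialize (IHC1 H)); try (specialize (IHC2 H)); lia.
Qed.

Lemma exists_fresh_conj D : exists c, ~ occurs (CConj c) D.
Proof. exists (S (max_conj D)). intros H. apply occurs_conj_le_max in H. lia. Qed.

Fixpoint csize (C : cirq) : nat :=
  match C with
  | COr A B | CAnd A B | CCap _ A B | CCup _ A B => S (csize A + csize B)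
  | _ => 1
  end.

Lemma csize_pos C : 1 <= csize C.
Proof. destruct C; simpl; lia. Qed.

Lemma csize_plug_lt X E E' : csize E' < csize E -> csize (plug X E') < csize (plug X E).
Proof. induction X; simpl; lia. Qed.

Lemma csize_plug_gt1 Z G : Z <> Hole -> 1 < csize (plug Z G).
Proof.
  assert (H : forall U V, 1 < S (csize U + csize V)) by (intros U V; pose proof (csize_pos U); lia).
  destruct Z; simpl; try congruence; intros _; apply H.
Qed.

(** * Derivations *)

Definition derives (P C : cirq) : Prop :=
  forall X, provable (plug X P) -> provable (plug X C).

Lemma derives_trans P Q C : derives P Q -> derives Q C -> derives P C.
Proof. intros H1 H2 X H; auto. Qed.

Lemma derives_plug Y P C : derives P C -> derives (plug Y P) (plug Y C).
Proof. intros H X HP. rewrite <- !plug_comp. apply H. now rewrite plug_comp. Qed.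

Lemma derives_of_rule P C : (forall X, rule1 (plug X P) (plug X C)) -> derives P C.
Proof. intros H X HP. exact (prov_rule _ _ HP (H X)). Qed.

Lemma derives_or_comm A B : derives (COr B A) (COr A B).
Proof. apply derives_of_rule. intros X. apply r_comm_or. Qed.

Lemma derives_and_comm A B : derives (CAnd B A) (CAnd A B).
Proof. apply derives_of_rule. intros X. apply r_comm_and. Qed.

Lemma derives_or_comm_r P A B : derives P (COr B A) -> derives P (COr A B).
Proof. intros H. eapply derives_trans; [exact H | apply derives_or_comm]. Qed.

Lemma derives_and_comm_r P A B : derives P (CAnd B A) -> derives P (CAnd A B).
Proof. intros H. eapply derives_trans; [exact H | apply derives_and_comm]. Qed.

Lemma derives_or_assoc A B C : derives (COr A (COr B C)) (COr (COr A B) C).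
Proof. apply derives_of_rule. intros X. apply r_assoc_or. Qed.

Lemma derives_or_assoc_r A B C : derives (COr (COr A B) C) (COr A (COr B C)).
Proof.
  eapply derives_trans; [apply derives_or_comm|].
  eapply derives_trans; [apply derives_or_assoc|].
  eapply derives_trans; [apply derives_or_comm|].
  eapply derives_trans; [apply derives_or_assoc|].
  apply derives_or_comm.
Qed.

Lemma derives_top_or_l F G : derives CTop F -> derives CTop (COr F G).
Proof.
  intros H.
  apply derives_trans with (COr CTop G).
  - apply derives_or_comm_r, derives_of_rule. intros X. apply r_dom_or.
  - apply (derives_plug (XOrL Hole G)), H.
Qed.

Lemma derives_top_or_r F G : derives CTop F -> derives CTop (COr G F).
Proof. intros H. apply derives_or_comm_r, derives_top_or_l, H. Qed.

Lemma derives_top_or_inner L G V :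
  derives CTop (COr L G) -> derives CTop (COr L (COr V G)).
Proof.
  intros H.
  eapply derives_trans; [|apply (derives_plug (XOrR L Hole)), derives_or_comm].
  eapply derives_trans; [|apply derives_or_assoc_r].
  apply derives_top_or_l, H.
Qed.

Lemma derives_top_disjunct E L G :
  disj_has E L -> derives CTop (COr L G) -> derives CTop (COr E G).
Proof.
  revert G. induction E; simpl; intros G HD HG;
    try (destruct HD as [<-|[]]; exact HG).
  destruct HD as [<-|[HD|HD]]; [exact HG| |].
  - eapply derives_trans; [|apply derives_or_assoc].
    apply IHE1, derives_top_or_inner; assumption.
  - eapply derives_trans; [|apply (derives_plug (XOrL Hole G)), derives_or_comm].
    eapply derives_trans; [|apply derives_or_assoc].
    apply IHE2, derives_top_or_inner; assumption.
Qed.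

Lemma derives_top_excluded_middle p : derives CTop (COr (CNeg p) (CPos p)).
Proof. apply derives_of_rule. intros X. apply r_triv. Qed.

Lemma derives_top_clash E p :
  disj_has E (CPos p) -> disj_has E (CNeg p) -> derives CTop E.
Proof.
  induction E; simpl; intros HP HN;
    try (destruct HP as [HP|[]]; destruct HN as [HN|[]]; congruence).
  destruct HP as [HP|[HP|HP]]; [discriminate| |];
  destruct HN as [HN|[HN|HN]]; try discriminate.
  - apply derives_top_or_l; auto.
  - apply derives_top_disjunct with (CPos p); [exact HP|].
    apply derives_or_comm_r, derives_top_disjunct with (CNeg p); [exact HN|].
    apply derives_top_excluded_middle.
  - apply derives_top_disjunct with (CNeg p); [exact HN|].
    apply derives_or_comm_r, derives_top_disjunct with (CPos p); [exact HP|].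
    apply derives_or_comm_r, derives_top_excluded_middle.
  - apply derives_top_or_r; auto.
Qed.

(** * Rank *)

Lemma pow5_gt x : x < 5 ^ x.
Proof. apply Nat.pow_gt_lin_r; lia. Qed.

Lemma pow5_double x : 2 * x <= 5 ^ x.
Proof. induction x; simpl; [lia|]. pose proof (pow5_gt x). lia. Qed.

Lemma tet5_pos n : 1 <= tet n 5.
Proof. destruct n; simpl; [lia|]. pose proof (pow5_gt (tet n 5)). lia. Qed.

Lemma tet5_ge n : n <= tet n 5.
Proof. induction n; simpl; [lia|]. pose proof (pow5_gt (tet n 5)). lia. Qed.

Lemma tet5_mono n m : n <= m -> tet n 5 <= tet m 5.
Proof.
  assert (Hstep : forall k, tet k 5 <= tet (S k) 5).
  { induction k; simpl in *; [lia|]. apply Nat.pow_le_mono_r; lia. }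
  induction 1; [lia|]. specialize (Hstep m). lia.
Qed.

Lemma tet5_add_le a b c : 1 <= a -> 1 <= b ->
  tet (a + c) 5 + tet (b + c) 5 <= tet (a + b + c) 5.
Proof.
  intros Ha Hb.
  set (n := Nat.max a b + c).
  pose proof (tet5_mono (a + c) n ltac:(lia)).
  pose proof (tet5_mono (b + c) n ltac:(lia)).
  pose proof (pow5_double (tet n 5)).
  pose proof (tet5_mono (S n) (a + b + c) ltac:(lia)).
  simpl in *. lia.
Qed.

Lemma rank_pos C : 1 <= rank C.
Proof.
  induction C; simpl; try lia; auto using tet5_pos.
  pose proof (pow5_gt (rank C1 + rank C2)). lia.
Qed.

Lemma rank_plug_mono X E E' : rank E' <= rank E -> rank (plug X E') <= rank (plug X E).
Proof.
  induction X; simpl; intros H; specialize (IHX H) || idtac; try lia;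
    solve [apply tet5_mono; lia | apply Nat.pow_le_mono_r; lia].
Qed.

Lemma rank_or_distr_and A B C :
  rank (CAnd (COr A C) (COr B C)) <= rank (COr (CAnd A B) C).
Proof.
  simpl. pose proof (rank_pos A); pose proof (rank_pos B); pose proof (rank_pos C).
  pose proof (tet5_add_le (rank A) (rank B) (rank C) ltac:(lia) ltac:(lia)).
  pose proof (pow5_gt (rank A + rank B)).
  apply Nat.le_trans with (tet (S (rank A + rank B + rank C)) 5).
  - simpl. apply Nat.pow_le_mono_r; lia.
  - apply tet5_mono. lia.
Qed.

Lemma rank_or_distr_cap c A B C :
  rank (CCap c (COr A C) (COr B C)) <= rank (COr (CCap c A B) C).
Proof.
  simpl. pose proof (rank_pos A); pose proof (rank_pos B).
  apply tet5_add_le; lia.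
Qed.

Lemma rank_quad a b c A B E F :
  rank (quad a b c A B E F) <= rank (CAnd (CCap a A B) (CCap b E F)).
Proof.
  unfold quad; simpl.
  pose proof (rank_pos A); pose proof (rank_pos B).
  pose proof (rank_pos E); pose proof (rank_pos F).
  set (x := rank A) in *; set (y := rank B) in *; set (z := rank E) in *; set (w := rank F) in *.
  (* each of the four summands is at most 5 ^ (x + y + z + w - 1) *)
  replace (x + y + (z + w)) with (S (x + y + z + w - 1)) by lia. simpl.
  pose proof (Nat.pow_le_mono_r 5 (x + (z + w)) (x + y + z + w - 1) ltac:(lia) ltac:(lia)).
  pose proof (Nat.pow_le_mono_r 5 (y + (z + w)) (x + y + z + w - 1) ltac:(lia) ltac:(lia)).
  pose proof (Nat.pow_le_mono_r 5 (x + y + z) (x + y + z + w - 1) ltac:(lia) ltac:(lia)).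
  pose proof (Nat.pow_le_mono_r 5 (x + y + w) (x + y + z + w - 1) ltac:(lia) ltac:(lia)).
  lia.
Qed.

(** * Winning and runs *)

Lemma wins_plug_mono has i X E E' :
  (wins has i E -> wins has i E') -> wins has i (plug X E) -> wins has i (plug X E').
Proof. induction X; simpl; intros H; try specialize (IHX H); tauto. Qed.

Lemma wins_plug_iff has i X E E' :
  (wins has i E <-> wins has i E') -> (wins has i (plug X E) <-> wins has i (plug X E')).
Proof. intros [H1 H2]; split; apply wins_plug_mono; auto. Qed.

Lemma wins_ext h1 h2 i C :
  (forall k v, occurs k C -> (h1 k v <-> h2 k v)) -> wins h1 i C -> wins h2 i C.
Proof.
  induction C; simpl; intros H; auto.
  - intros [W|W]; [left|right]; [apply IHC1|apply IHC2]; auto.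
  - intros [W1 W2]; split; [apply IHC1|apply IHC2]; auto.
  - pose proof (H (CConj c) false (or_introl eq_refl)).
    pose proof (H (CConj c) true (or_introl eq_refl)).
    assert (wins h1 i C1 -> wins h2 i C1) by (apply IHC1; auto).
    assert (wins h1 i C2 -> wins h2 i C2) by (apply IHC2; auto).
    tauto.
  - pose proof (H (CDisj c) false (or_introl eq_refl)).
    pose proof (H (CDisj c) true (or_introl eq_refl)).
    assert (wins h1 i C1 -> wins h2 i C1) by (apply IHC1; auto).
    assert (wins h1 i C2 -> wins h2 i C2) by (apply IHC2; auto).
    tauto.
Qed.

Lemma wins_disjunct has i E L : disj_has E L -> wins has i L -> wins has i E.
Proof. induction E; simpl; intros [<-|H] W; auto; tauto. Qed.

Definition consistent (has : cluster -> bool -> Prop) : Prop :=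
  forall k, ~ (has k false /\ has k true).

Definition moved (has : cluster -> bool -> Prop) (k : cluster) : Prop :=
  has k false \/ has k true.

Lemma run_upto_prefix M e r r' :
  r <= r' -> exists s, run_upto M e r ++ s = run_upto M e r'.
Proof.
  induction 1 as [|r' _ [s Hs]].
  - exists []. apply app_nil_r.
  - simpl. rewrite <- Hs. eexists. rewrite <- !app_assoc. reflexivity.
Qed.

Lemma run_prefix_upto M e r : run_prefix M e (run_upto M e r).
Proof. exists r, []. apply app_nil_r. Qed.

Lemma in_run_iff M e k v :
  in_run M e k v <-> exists r l, In (l, (k, v)) (run_upto M e r).
Proof.
  split.
  - intros (L & l & (r & s & Hs) & HI). exists r, l. rewrite <- Hs. apply in_or_app; auto.
  - intros (r & l & HI). exists (run_upto M e r), l. split; auto using run_prefix_upto.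
Qed.

Lemma legal_app_l L s : legal (L ++ s) -> legal L.
Proof.
  intros [H1 H2]. split.
  - apply Forall_app in H1; tauto.
  - rewrite map_app in H2. eapply NoDup_app_remove_r; eauto.
Qed.

Lemma NoDup_map_inj {A B : Type} (f : A -> B) L x y :
  NoDup (map f L) -> In x L -> In y L -> f x = f y -> x = y.
Proof.
  induction L as [|z L IH]; simpl; [tauto|]. intros HN Hx Hy Hf. inversion HN; subst.
  destruct Hx as [<-|Hx]; destruct Hy as [<-|Hy]; auto.
  - exfalso. rewrite Hf in *. auto using in_map.
  - exfalso. rewrite <- Hf in *. auto using in_map.
Qed.

Lemma in_run_upto_mono M e r r' y :
  r <= r' -> In y (run_upto M e r) -> In y (run_upto M e r').
Proof.
  intros Hr HI. destruct (run_upto_prefix M e r r' Hr) as [s <-]. apply in_or_app. auto.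
Qed.

Lemma in_run_consistent M e :
  (forall L, run_prefix M e L -> legal L) -> consistent (in_run M e).
Proof.
  intros HL k [H1 H2].
  apply in_run_iff in H1 as (r1 & l1 & H1), H2 as (r2 & l2 & H2).
  apply (in_run_upto_mono M e r1 (Nat.max r1 r2)) in H1; [|lia].
  apply (in_run_upto_mono M e r2 (Nat.max r1 r2)) in H2; [|lia].
  destruct (HL _ (run_prefix_upto M e (Nat.max r1 r2))) as [_ HN].
  pose proof (NoDup_map_inj _ _ _ _ HN H1 H2 eq_refl). congruence.
Qed.

Lemma valid_of_wins_imp C C' :
  (forall has i, consistent has -> wins has i C -> wins has i C') ->
  valid C -> valid C'.
Proof.
  intros H [M HM]. exists M. intros i e.
  destruct (HM i e) as [Hill|[Hleg Hw]]; [left; exact Hill | right; split; auto].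
  apply H; auto using in_run_consistent.
Qed.

Lemma first_illegal_split L0 : ~ legal L0 ->
  exists L x s, L ++ [x] ++ s = L0 /\ legal L /\ ~ legal (L ++ [x]).
Proof.
  induction L0 as [|y L0 IH] using rev_ind; intros H.
  - exfalso. apply H. split; constructor.
  - destruct (classic (legal L0)) as [HL|HL].
    + exists L0, y, []. rewrite app_nil_r. auto.
    + destruct (IH HL) as (L & x & s & <- & H1 & H2). exists L, x, (s ++ [y]).
      rewrite !app_assoc. auto.
Qed.

Lemma run_legal_or_first_illegal M e :
  (forall L, run_prefix M e L -> legal L) \/
  exists L x, run_prefix M e (L ++ [x]) /\ legal L /\ ~ legal (L ++ [x]).
Proof.
  destruct (classic (forall L, run_prefix M e L -> legal L)) as [H|H]; [now left|right].
  apply not_all_ex_not in H as [L0 H]. apply imply_to_and in H as [(r & s0 & Hs0) H].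
  destruct (first_illegal_split L0 H) as (L & x & s & <- & HL & Hill).
  exists L, x. split; [|auto].
  exists r, (s ++ s0). rewrite <- Hs0, !app_assoc. reflexivity.
Qed.

Lemma first_illegal_unique M e L1 x1 L2 x2 :
  run_prefix M e (L1 ++ [x1]) -> run_prefix M e (L2 ++ [x2]) ->
  legal L1 -> ~ legal (L1 ++ [x1]) -> legal L2 -> ~ legal (L2 ++ [x2]) -> x1 = x2.
Proof.
  intros (r1 & s1 & E1) (r2 & s2 & E2) G1 B1 G2 B2.
  destruct (run_upto_prefix M e r1 (Nat.max r1 r2) ltac:(lia)) as [t1 T1].
  destruct (run_upto_prefix M e r2 (Nat.max r1 r2) ltac:(lia)) as [t2 T2].
  rewrite <- E1, <- app_assoc in T1. rewrite <- E2, <- app_assoc, <- T1 in T2.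
  destruct (app_eq_app _ _ _ _ T2) as [t [[Ht _]|[Ht _]]];
    destruct t as [|z t _] using rev_ind.
  - rewrite app_nil_r in Ht. apply app_inj_tail in Ht. symmetry; tauto.
  - rewrite app_assoc in Ht. apply app_inj_tail in Ht as [-> _].
    exfalso. exact (B1 (legal_app_l _ _ G2)).
  - rewrite app_nil_r in Ht. apply app_inj_tail in Ht. tauto.
  - rewrite app_assoc in Ht. apply app_inj_tail in Ht as [-> _].
    exfalso. exact (B2 (legal_app_l _ _ G1)).
Qed.

(** * The quadrilemma step *)

Definition cluster_eqb (k1 k2 : cluster) : bool :=
  match k1, k2 with
  | CConj n, CConj m | CDisj n, CDisj m => Nat.eqb n m
  | _, _ => false
  end.

Lemma cluster_eqb_spec k1 k2 : cluster_eqb k1 k2 = true <-> k1 = k2.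
Proof. destruct k1, k2; simpl; rewrite ?Nat.eqb_eq; split; congruence. Qed.

Definition lm_cluster (x : lmove) : cluster := fst (snd x).

Definition env_move_in (k : cluster) (x : lmove) : bool :=
  negb (fst x) && cluster_eqb (lm_cluster x) k.

Lemma env_move_in_spec k x : env_move_in k x = true <-> fst x = false /\ lm_cluster x = k.
Proof.
  unfold env_move_in. rewrite andb_true_iff, negb_true_iff, cluster_eqb_spec. tauto.
Qed.

Definition env_moves (L : list lmove) : Prop := Forall (fun x => fst x = false) L.

Lemma env_moves_as_map (L : list lmove) :
  env_moves L -> map (fun m => (false, m)) (map snd L) = L.
Proof. induction 1 as [|[l m] L' Hx _ IH]; simpl in *; congruence. Qed.

Lemma legal_conj_move L l k v : legal L -> In (l, (CConj k, v)) L -> l = false.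
Proof.
  intros [HF _] HI. rewrite Forall_forall in HF. specialize (HF _ HI).
  destruct l; [contradiction | reflexivity].
Qed.

Lemma legal_snoc L x :
  legal L -> lmove_legal x -> ~ In (lm_cluster x) (map lm_cluster L) -> legal (L ++ [x]).
Proof.
  intros [HF HN] Hx Hnew. split.
  - apply Forall_app. auto.
  - change (fun m : lmove => fst (snd m)) with lm_cluster in *.
    rewrite map_app. apply NoDup_app; [exact HN | repeat constructor; auto |].
    intros y Hy [<-|[]]. contradiction.
Qed.

Section QuadSimulation.

Variables a b c : nat.

(* The machine for the premise is shown a virtual run: the real run without
   the environment's moves in the fresh cluster c, and with the environment move
   c.0 (resp. c.1) inserted just before the environment's first move in a
   (resp. b).  [opened] records whether that insertion has happened. *)

Definition opens_quad (x : lmove) : bool :=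
  env_move_in (CConj a) x || env_move_in (CConj b) x.

Definition quad_choice (x : lmove) : bool :=
  negb (cluster_eqb (lm_cluster x) (CConj a)).

Definition opens (x : lmove) : bool :=
  negb (env_move_in (CConj c) x) && opens_quad x.

Fixpoint quad_view (opened : bool) (L : list lmove) : list lmove :=
  match L with
  | [] => []
  | x :: L' =>
      if env_move_in (CConj c) x then quad_view opened L'
      else if negb opened && opens_quad x
           then (false, (CConj c, quad_choice x)) :: x :: quad_view true L'
      else x :: quad_view opened L'
  end.

Lemma quad_view_app st L1 L2 :
  quad_view st (L1 ++ L2) = quad_view st L1 ++ quad_view (st || existsb opens L1) L2.
Proof.
  revert st; induction L1 as [|x L1 IH]; intros st; simpl.
  - now rewrite orb_false_r.
  - unfold opens at 1. destruct (env_move_in (CConj c) x); simpl; [apply IH|].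
    destruct st, (opens_quad x); simpl; now rewrite IH.
Qed.

Lemma quad_view_machine_move st m L :
  quad_view st ((true, m) :: L) = (true, m) :: quad_view st L.
Proof. now destruct st. Qed.

Lemma quad_view_env_moves st L : env_moves L -> env_moves (quad_view st L).
Proof.
  unfold env_moves. revert st; induction L as [|x L IH]; intros st HF; simpl; auto.
  inversion HF; subst.
  destruct (env_move_in (CConj c) x); auto.
  destruct (negb st && opens_quad x); auto.
Qed.

Lemma in_quad_view_other st L y :
  lm_cluster y <> CConj c -> In y (quad_view st L) <-> In y L.
Proof.
  intros Hy. revert st; induction L as [|x L IH]; intros st; simpl; [tauto|].
  destruct (env_move_in (CConj c) x) eqn:Ex.
  - rewrite IH. apply env_move_in_spec in Ex. intuition congruence.
  - destruct (negb st && opens_quad x); simpl; rewrite IH; [|tauto].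
    split; [intros [<-|H]; [contradiction|exact H] | auto].
Qed.

Lemma in_quad_view_inserted st L v :
  In (false, (CConj c, v)) (quad_view st L) ->
  exists w, In (false, (CConj (if v then b else a), w)) L.
Proof.
  revert st; induction L as [|x L IH]; intros st HI; simpl in *; [contradiction|].
  assert (Hrec : forall st', In (false, (CConj c, v)) (quad_view st' L) ->
                 exists w, x = (false, (CConj (if v then b else a), w)) \/
                           In (false, (CConj (if v then b else a), w)) L).
  { intros st' H. destruct (IH st' H) as [w Hw]. eauto. }
  destruct (env_move_in (CConj c) x) eqn:Ex; [eauto|].
  assert (Hx : x <> (false, (CConj c, v))).
  { intros ->. unfold env_move_in in Ex. simpl in Ex. now rewrite Nat.eqb_refl in Ex. }
  destruct (negb st && opens_quad x) eqn:Eo; simpl in HI.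
  - destruct HI as [Hv|[HI|HI]]; [|congruence|eauto].
    injection Hv as <-. exists (snd (snd x)). left.
    apply andb_true_iff in Eo as [_ Eo]. unfold opens_quad, quad_choice in *.
    destruct x as [l [k w]].
    rewrite orb_true_iff, !env_move_in_spec in Eo. unfold lm_cluster in *; simpl in *.
    destruct Eo as [[-> ->]|[-> ->]]; simpl; [now rewrite Nat.eqb_refl|].
    destruct (Nat.eqb b a) eqn:Eba; simpl; [apply Nat.eqb_eq in Eba; now rewrite Eba|reflexivity].
  - destruct HI as [HI|HI]; [congruence|eauto].
Qed.

Lemma quad_view_opened L x :
  In x L -> opens x = true -> exists v, In (false, (CConj c, v)) (quad_view false L).
Proof.
  induction L as [|y L IH]; intros HI Ho; simpl in *; [contradiction|].
  unfold opens in Ho. apply andb_true_iff in Ho as [Hnc Ho].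
  destruct (env_move_in (CConj c) y) eqn:Ey.
  - destruct HI as [<-|HI]; [now rewrite Ey in Hnc|].
    apply IH; [exact HI | unfold opens; now rewrite Hnc, Ho].
  - simpl. destruct (opens_quad y) eqn:Eq; simpl; [eauto|].
    destruct HI as [<-|HI]; [congruence|].
    destruct (IH HI) as [v Hv]; [unfold opens; now rewrite Hnc, Ho|]. eauto.
Qed.

Lemma quad_view_clusters st L :
  legal L ->
  NoDup (map lm_cluster (quad_view st L)) /\
  (st = true -> ~ In (CConj c) (map lm_cluster (quad_view st L))) /\
  incl (map lm_cluster (quad_view st L)) (CConj c :: map lm_cluster L).
Proof.
  revert st; induction L as [|x L IH]; intros st HL; simpl.
  - repeat split; auto using NoDup_nil, incl_nil_l.
  - destruct HL as [HF HN].
    inversion HF as [|? ? Hxl HF']; inversion HN as [|? ? Hnx HN']; subst.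
    specialize (fun st' => IH st' (conj HF' HN')).
    destruct (env_move_in (CConj c) x) eqn:Ex.
    + destruct (IH st) as (N & C & I). repeat split; auto.
      intros k Hk. destruct (I k Hk); simpl; auto.
    + assert (Hxc : lm_cluster x <> CConj c).
      { intros Hc. destruct x as [[|] [k v]]; unfold lm_cluster in Hc; simpl in Hc; subst k.
        - exact Hxl.
        - unfold env_move_in in Ex; simpl in Ex. now rewrite Nat.eqb_refl in Ex. }
      assert (Fx : forall st', ~ In (lm_cluster x) (map lm_cluster (quad_view st' L))).
      { intros st' Hin. destruct (proj2 (proj2 (IH st')) _ Hin) as [Heq|Hin'];
          [congruence | exact (Hnx Hin')]. }
      destruct (negb st && opens_quad x) eqn:Eo; simpl.
      * destruct st; [discriminate|].
        destruct (IH true) as (N & C & I). pose proof (Fx true).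
        repeat split.
        -- constructor; [|constructor; auto].
           intros [Hc|Hc]; [exact (Hxc Hc) | exact (C eq_refl Hc)].
        -- discriminate.
        -- intros k [<-|[<-|Hk]]; simpl; auto. destruct (I k Hk); simpl; auto.
      * destruct (IH st) as (N & C & I). pose proof (Fx st).
        repeat split.
        -- constructor; auto.
        -- intros Hs [Hc|Hc]; [congruence | exact (C Hs Hc)].
        -- intros k [<-|Hk]; simpl; auto. destruct (I k Hk); simpl; auto.
Qed.

Lemma quad_view_moves_legal st L :
  Forall lmove_legal L -> Forall lmove_legal (quad_view st L).
Proof.
  revert st; induction L as [|x L IH]; intros st HF; simpl; auto.
  inversion HF; subst.
  destruct (env_move_in (CConj c) x); auto.
  destruct (negb st && opens_quad x); repeat constructor; auto.
Qed.

Lemma quad_view_legal st L : legal L -> legal (quad_view st L).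
Proof.
  intros HL. split.
  - apply quad_view_moves_legal, HL.
  - apply (quad_view_clusters st L HL).
Qed.

Lemma quad_view_machine_illegal L x :
  legal L -> ~ legal (L ++ [x]) -> fst x = true -> ~ legal (quad_view false L ++ [x]).
Proof.
  intros HL Hill Hx HV. apply Hill.
  destruct HV as [HF HN]. apply Forall_app in HF as [_ HFx]. inversion HFx as [|? ? Hxl _]; subst.
  apply legal_snoc; auto.
  assert (Hxc : lm_cluster x <> CConj c).
  { destruct x as [l [[k|k] v]]; simpl in Hx; subst l; [contradiction | discriminate]. }
  intros Hin. apply in_map_iff in Hin as [y [Hy Hyin]].
  change (fun m : lmove => fst (snd m)) with lm_cluster in HN.
  rewrite map_app in HN. apply NoDup_remove_2 in HN. rewrite app_nil_r in HN. apply HN.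
  apply in_map_iff. exists y. split; auto.
  apply in_quad_view_other; congruence.
Qed.

Definition quad_machine (M : machine) : machine := fun r L => M r (quad_view false L).

Definition quad_env (M : machine) (e : envir) : envir :=
  fun r => map snd (quad_view (existsb opens (run_upto (quad_machine M) e r))
                              (map (fun m => (false, m)) (e r))).

Lemma run_upto_quad M e r :
  run_upto M (quad_env M e) r = quad_view false (run_upto (quad_machine M) e r).
Proof.
  induction r as [|r IH]; simpl; auto.
  set (R := run_upto (quad_machine M) e r).
  assert (HE : map (fun m => (false, m)) (quad_env M e r)
               = quad_view (existsb opens R) (map (fun m => (false, m)) (e r))).
  { apply env_moves_as_map, quad_view_env_moves.
    unfold env_moves. rewrite Forall_map. apply Forall_forall. reflexivity. }
  rewrite HE, IH. fold R.
  rewrite <- (quad_view_app false R). unfold quad_machine.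
  destruct (M r (quad_view false (R ++ map (fun m => (false, m)) (e r)))) as [m|].
  - now rewrite (quad_view_app false (R ++ _) [(true, m)]), quad_view_machine_move.
  - now rewrite !app_nil_r.
Qed.

Lemma wins_quad_fwd h i A B E F :
  wins h i (CAnd (CCap a A B) (CCap b E F)) -> wins h i (quad a b c A B E F).
Proof.
  unfold quad; simpl.
  destruct (classic (h (CConj c) false)), (classic (h (CConj c) true)); tauto.
Qed.

Lemma wins_quad_back h i A B E F :
  (h (CConj c) false -> moved h (CConj a)) ->
  (h (CConj c) true -> moved h (CConj b)) ->
  (moved h (CConj a) \/ moved h (CConj b) -> moved h (CConj c)) ->
  wins h i (quad a b c A B E F) -> wins h i (CAnd (CCap a A B) (CCap b E F)).
Proof. unfold moved, quad; simpl. tauto. Qed.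

Section QuadRuns.

Variables (M : machine) (e : envir).

Lemma quad_machine_no_fault i Q :
  top_wins i Q M (quad_env M e) ->
  forall L x, run_prefix (quad_machine M) e (L ++ [x]) -> legal L -> ~ legal (L ++ [x]) ->
  fst x = false.
Proof.
  intros HM L x (r & s & Hs) HL Hill. destruct (fst x) eqn:Hx; [exfalso|reflexivity].
  assert (Hv : run_prefix M (quad_env M e) (quad_view false L ++ [x])).
  { exists r, (quad_view (existsb opens (L ++ [x])) s).
    rewrite run_upto_quad, <- Hs, !quad_view_app.
    destruct x as [l m]; simpl in Hx; subst l.
    rewrite quad_view_machine_move, <- !app_assoc. reflexivity. }
  pose proof (quad_view_legal false L HL) as HvL.
  pose proof (quad_view_machine_illegal L x HL Hill Hx) as Hvill.
  destruct HM as [(L2 & x2 & Hp2 & HL2 & Hill2 & Hx2)|[Hleg _]].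
  - pose proof (first_illegal_unique _ _ _ _ _ _ Hv Hp2 HvL Hvill HL2 Hill2). congruence.
  - exact (Hvill (Hleg _ Hv)).
Qed.

Hypotheses (Hac : a <> c) (Hbc : b <> c).
Hypothesis real_legal : forall L, run_prefix (quad_machine M) e L -> legal L.

Lemma in_quad_run_other k v :
  k <> CConj c -> in_run M (quad_env M e) k v <-> in_run (quad_machine M) e k v.
Proof.
  intros Hk. rewrite !in_run_iff.
  split; intros (r & l & HI); exists r, l; rewrite run_upto_quad in *;
    apply in_quad_view_other in HI || apply in_quad_view_other; auto.
Qed.

Lemma quad_run_legal L : run_prefix M (quad_env M e) L -> legal L.
Proof.
  intros (r & s & Hs). apply (legal_app_l L s). rewrite Hs, run_upto_quad.
  apply quad_view_legal, real_legal, run_prefix_upto.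
Qed.

Lemma quad_virtual_choice v :
  in_run M (quad_env M e) (CConj c) v ->
  moved (in_run M (quad_env M e)) (CConj (if v then b else a)).
Proof.
  intros Hv. pose proof Hv as (r & l & HI)%in_run_iff.
  pose proof (legal_conj_move _ _ _ _ (quad_run_legal _ (run_prefix_upto _ _ r)) HI) as ->.
  rewrite run_upto_quad in HI. apply in_quad_view_inserted in HI as [w Hw].
  assert (Hne : CConj (if v then b else a) <> CConj c) by (destruct v; congruence).
  destruct w; [right|left]; apply in_quad_run_other; auto;
    apply in_run_iff; exists r, false; exact Hw.
Qed.

Lemma quad_virtual_opened :
  moved (in_run M (quad_env M e)) (CConj a) \/ moved (in_run M (quad_env M e)) (CConj b) ->
  moved (in_run M (quad_env M e)) (CConj c).
Proof.
  assert (Hopen : forall k w, in_run M (quad_env M e) (CConj k) w -> k = a \/ k = b ->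
            moved (in_run M (quad_env M e)) (CConj c)).
  { intros k w Hw Hk. apply in_quad_run_other in Hw; [|destruct Hk; congruence].
    apply in_run_iff in Hw as (r & l & HI).
    pose proof (legal_conj_move _ _ _ _ (real_legal _ (run_prefix_upto _ _ r)) HI) as ->.
    destruct (quad_view_opened _ _ HI) as [v Hv].
    { unfold opens, opens_quad, env_move_in, lm_cluster. simpl.
      destruct Hk as [->| ->]; rewrite Nat.eqb_refl, ?orb_true_r;
        apply Nat.eqb_neq in Hac, Hbc; now rewrite ?Hac, ?Hbc. }
    rewrite <- run_upto_quad in Hv.
    destruct v; [right|left]; apply in_run_iff; eauto. }
  intros [[H|H]|[H|H]]; apply (Hopen _ _ H); auto.
Qed.

End QuadRuns.

Lemma valid_quad_back X A B E F :
  ~ occurs (CConj c) (plug X (CAnd (CCap a A B) (CCap b E F))) ->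
  valid (plug X (quad a b c A B E F)) -> valid (plug X (CAnd (CCap a A B) (CCap b E F))).
Proof.
  intros Hc [M HM].
  assert (Hac : a <> c) by (intros ->; apply Hc, occurs_plug; simpl; auto).
  assert (Hbc : b <> c) by (intros ->; apply Hc, occurs_plug; simpl; auto).
  exists (quad_machine M). intros i e.
  destruct (run_legal_or_first_illegal (quad_machine M) e)
    as [Hleg|(L & x & Hp & HL & Hill)].
  2:{ left. exists L, x. refine (conj Hp (conj HL (conj Hill _))).
       exact (quad_machine_no_fault M e i _ (HM i (quad_env M e)) L x Hp HL Hill). }
  right. split; [exact Hleg|].
  destruct (HM i (quad_env M e)) as [(L & x & Hp & _ & Hill & _)|[_ Hw]].
  { exfalso. exact (Hill (quad_run_legal M e Hleg _ Hp)). }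
  apply (wins_ext (in_run M (quad_env M e))).
  - intros k v Hk. apply in_quad_run_other. intros ->. contradiction.
  - revert Hw. apply wins_plug_mono, wins_quad_back.
    + apply (quad_virtual_choice M e Hac Hbc Hleg false).
    + apply (quad_virtual_choice M e Hac Hbc Hleg true).
    + apply (quad_virtual_opened M e Hac Hbc Hleg).
Qed.

End QuadSimulation.

(** * Faithfulness of the purification steps *)

Definition faithful (D D' : cirq) : Prop :=
  (provable D' -> provable D) /\ (valid D <-> valid D') /\ rank D' <= rank D.

Lemma faithful_refl D : faithful D D.
Proof. repeat split; auto. Qed.

Lemma faithful_trans D1 D2 D3 : faithful D1 D2 -> faithful D2 D3 -> faithful D1 D3.
Proof. intros (P1 & V1 & R1) (P2 & V2 & R2). repeat split; try tauto; lia. Qed.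

Definition faithful_rewrite (E E' : cirq) : Prop :=
  derives E' E /\ (forall has i, wins has i E <-> wins has i E') /\ rank E' <= rank E.

Lemma faithful_rewrite_or_comm A B E' :
  faithful_rewrite (COr A B) E' -> faithful_rewrite (COr B A) E'.
Proof.
  intros (HD & HW & HR). split; [|split].
  - apply derives_or_comm_r, HD.
  - intros has i. rewrite <- HW. simpl. tauto.
  - simpl in *. now rewrite Nat.add_comm.
Qed.

Lemma faithful_rewrite_and_comm A B E' :
  faithful_rewrite (CAnd A B) E' -> faithful_rewrite (CAnd B A) E'.
Proof.
  intros (HD & HW & HR). split; [|split].
  - apply derives_and_comm_r, HD.
  - intros has i. rewrite <- HW. simpl. tauto.
  - simpl in *. now rewrite Nat.add_comm.
Qed.

Lemma faithful_surf_change (pat : cirq -> cirq -> Prop) D D' :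
  (forall E E', pat E E' -> faithful_rewrite E E') -> surf_change pat D D' -> faithful D D'.
Proof.
  intros H (X & E & E' & _ & Hp & -> & ->). destruct (H _ _ Hp) as (HD & HW & HR).
  repeat split.
  - apply HD.
  - apply valid_of_wins_imp. intros has i _. apply wins_plug_mono, HW.
  - apply valid_of_wins_imp. intros has i _. apply wins_plug_mono, HW.
  - now apply rank_plug_mono.
Qed.

Lemma faithful_s1a D D' : s1a D D' -> faithful D D'.
Proof.
  apply faithful_surf_change. intros E E' (A & HE & ->).
  assert (H : faithful_rewrite (COr A CBot) A).
  { split; [|split]; [| intros has i; simpl; tauto |].
    - apply derives_of_rule. intros X. apply r_id_or.
    - simpl. pose proof (tet5_ge (rank A + 1)). lia. }
  destruct HE as [->| ->]; auto using faithful_rewrite_or_comm.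
Qed.

Lemma faithful_s1b D D' : s1b D D' -> faithful D D'.
Proof.
  apply faithful_surf_change. intros E E' (A & HE & ->).
  assert (H : faithful_rewrite (CAnd A CBot) CBot).
  { split; [|split]; [| intros has i; simpl; tauto |].
    - apply derives_of_rule. intros X. apply r_dom_and.
    - simpl. pose proof (pow5_gt (rank A + 1)). lia. }
  destruct HE as [->| ->]; auto using faithful_rewrite_and_comm.
Qed.

Lemma faithful_s2 D D' : s2 D D' -> faithful D D'.
Proof.
  apply faithful_surf_change. intros E E' (A & B & C & HE & ->).
  assert (H : faithful_rewrite (COr (CAnd A B) C) (CAnd (COr A C) (COr B C))).
  { split; [|split]; [| intros has i; simpl; tauto |].
    - apply derives_of_rule. intros X. apply r_distr_and.
    - apply rank_or_distr_and. }
  destruct HE as [->| ->]; auto using faithful_rewrite_or_comm.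
Qed.

Lemma faithful_s3 D D' : s3 D D' -> faithful D D'.
Proof.
  apply faithful_surf_change. intros E E' (c & A & B & C & HE & ->).
  assert (H : faithful_rewrite (COr (CCap c A B) C) (CCap c (COr A C) (COr B C))).
  { split; [|split].
    - apply derives_of_rule. intros X. apply r_distr_cap.
    - intros has i. simpl.
      destruct (classic (has (CConj c) false)), (classic (has (CConj c) true)); tauto.
    - apply rank_or_distr_cap. }
  destruct HE as [->| ->]; auto using faithful_rewrite_or_comm.
Qed.

Lemma faithful_s4 D D' : s4 D D' -> faithful D D'.
Proof.
  apply faithful_surf_change. intros E E' ((p & HP & HN) & ->). split; [|split].
  - exact (derives_top_clash E p HP HN).
  - intros has i. simpl. split; [auto|]. intros _. destruct (i p) eqn:Hp.
    + apply wins_disjunct with (CPos p); auto.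
    + apply wins_disjunct with (CNeg p); auto.
  - apply rank_pos.
Qed.

Lemma faithful_s5a D D' : s5a D D' -> faithful D D'.
Proof.
  apply faithful_surf_change. intros E E' (A & HE & ->).
  assert (H : faithful_rewrite (COr A CTop) CTop).
  { split; [|split]; [| intros has i; simpl; tauto |].
    - apply derives_of_rule. intros X. apply r_dom_or.
    - simpl. apply tet5_pos. }
  destruct HE as [->| ->]; auto using faithful_rewrite_or_comm.
Qed.

Lemma faithful_s5b D D' : s5b D D' -> faithful D D'.
Proof.
  apply faithful_surf_change. intros E E' (A & HE & ->).
  assert (H : faithful_rewrite (CAnd A CTop) A).
  { split; [|split]; [| intros has i; simpl; tauto |].
    - apply derives_of_rule. intros X. apply r_id_and.
    - simpl. pose proof (pow5_gt (rank A + 1)). lia. }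
  destruct HE as [->| ->]; auto using faithful_rewrite_and_comm.
Qed.

Lemma faithful_s6 D D' : s6 D D' -> faithful D D'.
Proof.
  intros (c & Hc & X & E & E' & _ & (a & b & A & B & E1 & F1 & -> & ->) & -> & ->).
  repeat split.
  - intros H. exact (prov_rule _ _ H (r_quad X a b c A B E1 F1 Hc)).
  - apply valid_of_wins_imp. intros has i _. apply wins_plug_mono, wins_quad_fwd.
  - now apply valid_quad_back.
  - apply rank_plug_mono, rank_quad.
Qed.

Lemma wins_cleanse h i X c E F A :
  consistent h ->
  (wins h i (CCap c (plug X (CCap c E F)) A) <-> wins h i (CCap c (plug X E) A)) /\
  (wins h i (CCap c A (plug X (CCap c E F))) <-> wins h i (CCap c A (plug X F))).
Proof.
  intros Hcons. specialize (Hcons (CConj c)). simpl.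
  assert (K0 : h (CConj c) false -> (wins h i (plug X (CCap c E F)) <-> wins h i (plug X E)))
    by (intros H0; apply wins_plug_iff; simpl; tauto).
  assert (K1 : h (CConj c) true -> (wins h i (plug X (CCap c E F)) <-> wins h i (plug X F)))
    by (intros H0; apply wins_plug_iff; simpl; tauto).
  tauto.
Qed.

Lemma faithful_s7 D D' : s7 D D' -> faithful D D'.
Proof.
  intros (X & c & E & F & A & [[-> ->]|[-> ->]]); repeat split;
    try (apply valid_of_wins_imp; intros h i Hcons; apply (wins_cleanse h i X c E F A Hcons)).
  - intros H. exact (prov_rule _ _ H (r_cleanse_l Hole X c E F A)).
  - simpl. pose proof (rank_plug_mono X (CCap c E F) E ltac:(simpl; lia)). lia.
  - intros H. exact (prov_rule _ _ H (r_cleanse_r Hole X c E F A)).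
  - simpl. pose proof (rank_plug_mono X (CCap c E F) F ltac:(simpl; lia)). lia.
Qed.

Lemma faithful_opt (s : cirq -> cirq -> Prop) :
  (forall D D', s D D' -> faithful D D') -> forall D D', opt s D D' -> faithful D D'.
Proof. intros H D D' [K|[_ ->]]; auto using faithful_refl. Qed.

Lemma faithful_iter2 (s t : cirq -> cirq -> Prop) :
  (forall D D', s D D' -> faithful D D') -> (forall D D', t D D' -> faithful D D') ->
  forall D D', iter2 s t D D' -> faithful D D'.
Proof.
  intros Hs Ht D D' (D1 & o1 & o2).
  apply faithful_trans with D1.
  - exact (faithful_opt s Hs _ _ o1).
  - exact (faithful_opt t Ht _ _ o2).
Qed.

Lemma faithful_loop (it : cirq -> cirq -> Prop) :
  (forall D D', it D D' -> faithful D D') -> forall D D', loop it D D' -> faithful D D'.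
Proof. intros H D D'. induction 1; eauto using faithful_refl, faithful_trans. Qed.

Lemma purification_faithful A B : purification A B -> faithful A B.
Proof.
  intros (D1 & D2 & D3 & D4 & D5 & D6 & L1 & L2 & L3 & L4 & L5 & L6 & L7).
  apply faithful_trans with D1.
  { exact (faithful_loop _ (faithful_iter2 _ _ faithful_s1a faithful_s1b) _ _ L1). }
  apply faithful_trans with D2; [exact (faithful_loop _ (faithful_opt _ faithful_s2) _ _ L2)|].
  apply faithful_trans with D3; [exact (faithful_loop _ (faithful_opt _ faithful_s3) _ _ L3)|].
  apply faithful_trans with D4; [exact (faithful_loop _ (faithful_opt _ faithful_s4) _ _ L4)|].
  apply faithful_trans with D5.
  { exact (faithful_loop _ (faithful_iter2 _ _ faithful_s5a faithful_s5b) _ _ L5). }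
  apply faithful_trans with D6; [exact (faithful_loop _ (faithful_opt _ faithful_s6) _ _ L6)|].
  exact (faithful_loop _ (faithful_opt _ faithful_s7) _ _ L7).
Qed.

(** * Purity *)

Lemma surf_here (P : cirq -> Prop) E : P E -> surf P E.
Proof. destruct E; simpl; auto. Qed.

Lemma surf_plug (P : cirq -> Prop) X E : surface_ctx X -> surf P E -> surf P (plug X E).
Proof. induction X; simpl; tauto. Qed.

Lemma surf_inv (P : cirq -> Prop) D :
  surf P D -> exists X E, surface_ctx X /\ D = plug X E /\ P E.
Proof.
  induction D as [| | | |D1 IH1 D2 IH2|D1 IH1 D2 IH2| |]; intros H; destruct H as [H|H];
    try (exists Hole; eexists; repeat split; exact H); simpl in H; try contradiction.
  - destruct H as [H|H].
    + destruct (IH1 H) as (X & E & HX & -> & HE). now exists (XOrL X D2), E.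
    + destruct (IH2 H) as (X & E & HX & -> & HE). now exists (XOrR D1 X), E.
  - destruct H as [H|H].
    + destruct (IH1 H) as (X & E & HX & -> & HE). now exists (XAndL X D2), E.
    + destruct (IH2 H) as (X & E & HX & -> & HE). now exists (XAndR D1 X), E.
Qed.

Lemma surf_surf (P Q : cirq -> Prop) D :
  surf P D -> (forall E, P E -> surf Q E) -> surf Q D.
Proof. intros H HPQ. destruct (surf_inv P D H) as (X & E & HX & -> & HE). auto using surf_plug. Qed.

Lemma surf_or_l (P : cirq -> Prop) U V : surf P U -> surf P (COr U V).
Proof. intros H. right. left. exact H. Qed.

Lemma surf_or_r (P : cirq -> Prop) U V : surf P V -> surf P (COr U V).
Proof. intros H. right. right. exact H. Qed.

Lemma surf_replace (P : cirq -> Prop) X E E' :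
  surface_ctx X ->
  (surf P E' -> surf P E) ->
  (forall Z, surface_ctx Z -> Z <> Hole -> P (plug Z E') -> P (plug Z E)) ->
  surf P (plug X E') -> surf P (plug X E).
Proof.
  intros HX Hloc Hanc. induction X as [|X IH B|A X IH|X IH B|A X IH| | | |];
    simpl in *; try contradiction; auto.
  - intros [H|[H|H]]; auto. left. apply (Hanc (XOrL X B)); simpl; auto. discriminate.
  - intros [H|[H|H]]; auto. left. apply (Hanc (XOrR A X)); simpl; auto. discriminate.
  - intros [H|[H|H]]; auto. left. apply (Hanc (XAndL X B)); simpl; auto. discriminate.
  - intros [H|[H|H]]; auto. left. apply (Hanc (XAndR A X)); simpl; auto. discriminate.
Qed.

Definition atom_free (K D : cirq) : Prop := D <> K -> ~ surf (fun E => E = K) D.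

Definition or_over (Q : cirq -> Prop) (E : cirq) : Prop :=
  match E with COr A B => surf Q A \/ surf Q B | _ => False end.

Definition clash (E : cirq) : Prop := exists p, disj_has E (CPos p) /\ disj_has E (CNeg p).

(* Clause (k) of [pure]; Stage k of the procedure establishes it. *)
Definition purity_condition (k : nat) (D : cirq) : Prop :=
  match k with
  | 1 => atom_free CBot D
  | 2 => ~ surf (or_over is_and) D
  | 3 => ~ surf (or_over is_cap) D
  | 4 => ~ surf clash D
  | 5 => atom_free CTop D
  | 6 => forall A B, D = CAnd A B -> ~ (conj_all_cap A /\ conj_all_cap B)
  | 7 => forall c A B, D = CCap c A B -> ~ occurs (CConj c) A /\ ~ occurs (CConj c) B
  | _ => True
  end.

Fixpoint pure_upto (n : nat) (D : cirq) : Prop :=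
  match n with
  | 0 => True
  | S m => pure_upto m D /\ purity_condition (S m) D
  end.

Lemma pure_of_pure_upto D : pure_upto 7 D -> pure D.
Proof.
  intros (((((((_ & H1) & H2) & H3) & H4) & H5) & H6) & H7).
  exact (conj H1 (conj H2 (conj H3 (conj H4 (conj H5 (conj H6 H7)))))).
Qed.

Lemma atom_free_replace K X E E' :
  csize K = 1 -> surface_ctx X -> E <> K ->
  (surf (fun G => G = K) E' -> surf (fun G => G = K) E) ->
  atom_free K (plug X E) -> atom_free K (plug X E').
Proof.
  intros HK HX HE Hloc HD _ HS. apply HD.
  - destruct (classic (X = Hole)) as [->|HX']; [exact HE|].
    intros Heq. pose proof (csize_plug_gt1 X E HX'). rewrite Heq in *. lia.
  - revert HS. apply surf_replace; auto.
    intros Z _ HZ Heq. pose proof (csize_plug_gt1 Z E' HZ). rewrite Heq in *. lia.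
Qed.

Lemma or_over_free_replace (Q : cirq -> Prop) X E E' :
  (forall Z G G', Z <> Hole -> Q (plug Z G') -> Q (plug Z G)) ->
  surface_ctx X ->
  (surf Q E' -> surf Q E) -> (surf (or_over Q) E' -> surf (or_over Q) E) ->
  ~ surf (or_over Q) (plug X E) -> ~ surf (or_over Q) (plug X E').
Proof.
  intros HQ HX HlocQ Hloc HD HS. apply HD. revert HS. apply surf_replace; auto.
  assert (Hsub : forall Z, surface_ctx Z -> surf Q (plug Z E') -> surf Q (plug Z E)).
  { intros Z HZ. apply surf_replace; eauto. }
  intros Z HZ Hne. destruct Z; simpl in *; try contradiction; try tauto;
    intros [H|H]; auto.
Qed.

Lemma is_and_plug Z G G' : Z <> Hole -> is_and (plug Z G') -> is_and (plug Z G).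
Proof. destruct Z; simpl; tauto. Qed.

Lemma is_cap_plug Z G G' : Z <> Hole -> is_cap (plug Z G') -> is_cap (plug Z G).
Proof. destruct Z; simpl; tauto. Qed.

Definition is_lit (L : cirq) : Prop := match L with CPos _ | CNeg _ => True | _ => False end.

Lemma disj_has_plug Z E E' L :
  surface_ctx Z -> is_lit L ->
  disj_has (plug Z E') L -> disj_has (plug Z E) L \/ disj_has E' L.
Proof.
  intros HZ HL. induction Z; simpl in *; try contradiction; auto;
    intros [K|K]; try (subst L; contradiction); try tauto;
    destruct K as [K|K]; try tauto; destruct (IHZ HZ K); tauto.
Qed.

Lemma clash_free_replace X E E' :
  surface_ctx X -> (forall L, is_lit L -> ~ disj_has E' L) ->
  (surf clash E' -> surf clash E) ->
  ~ surf clash (plug X E) -> ~ surf clash (plug X E').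
Proof.
  intros HX HE' Hloc HD HS. apply HD. revert HS. apply surf_replace; auto.
  intros Z HZ _ (p & HP & HN). exists p. split.
  - destruct (disj_has_plug Z E E' (CPos p) HZ I HP) as [K|K]; [exact K|].
    exfalso. exact (HE' (CPos p) I K).
  - destruct (disj_has_plug Z E E' (CNeg p) HZ I HN) as [K|K]; [exact K|].
    exfalso. exact (HE' (CNeg p) I K).
Qed.

Fixpoint and_ctx (X : ctx) : Prop :=
  match X with
  | Hole => True
  | XAndL X _ | XAndR _ X => and_ctx X
  | _ => False
  end.

Lemma and_ctx_of_and_free X E :
  surface_ctx X -> is_and E -> ~ surf (or_over is_and) (plug X E) -> and_ctx X.
Proof.
  intros HX HE. induction X; simpl in *; try contradiction; auto; intros HN;
    try (apply IHX; tauto).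
  - exfalso. apply HN. left. left. apply surf_plug, surf_here; auto.
  - exfalso. apply HN. left. right. apply surf_plug, surf_here; auto.
Qed.

Lemma surf_replace_and_ctx (P : cirq -> Prop) X E E' :
  and_ctx X -> (forall U V, ~ P (CAnd U V)) ->
  (surf P E' -> surf P E) -> surf P (plug X E') -> surf P (plug X E).
Proof.
  intros HX HP Hloc. induction X; simpl in *; try contradiction; auto;
    intros [H|[H|H]]; auto; exfalso; eapply HP; eauto.
Qed.

(* Side conditions of the replacement lemmas: one layer of [surf] unfolded. *)
Ltac solve_local :=
  unfold or_over, clash, quad, not; simpl; intros;
  repeat match goal with
         | H : _ \/ _ |- _ => destruct H
         | H : _ /\ _ |- _ => destruct H
         | H : exists _, _ |- _ => destruct H
         end;
  subst; simpl in *; try discriminate; try contradiction; tauto.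

Lemma pure_upto_s2 D D' : s2 D D' -> pure_upto 1 D -> pure_upto 1 D'.
Proof.
  intros (X & E & E' & HX & (A & B & C & HE & ->) & -> & ->) (_ & H1).
  cbn [pure_upto purity_condition] in *.
  split; [exact I|].
  apply (atom_free_replace _ _ E); auto; destruct HE as [->| ->]; solve_local.
Qed.

Lemma pure_upto_s3 D D' : s3 D D' -> pure_upto 2 D -> pure_upto 2 D'.
Proof.
  intros (X & E & E' & HX & (c & A & B & C & HE & ->) & -> & ->) ((_ & H1) & H2).
  cbn [pure_upto purity_condition] in *.
  repeat split.
  - apply (atom_free_replace _ _ E); auto; destruct HE as [->| ->]; solve_local.
  - apply (or_over_free_replace _ _ E _ is_and_plug); auto;
      destruct HE as [->| ->]; solve_local.
Qed.

Lemma pure_upto_s4 D D' : s4 D D' -> pure_upto 3 D -> pure_upto 3 D'.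
Proof.
  intros (X & E & E' & HX & ((p & HP & HN) & ->) & -> & ->) (((_ & H1) & H2) & H3).
  cbn [pure_upto purity_condition] in *.
  assert (HE : E <> CBot) by (intros ->; destruct HP as [HP|[]]; discriminate).
  repeat split.
  - apply (atom_free_replace _ _ E); auto; solve_local.
  - apply (or_over_free_replace _ _ E _ is_and_plug); auto; solve_local.
  - apply (or_over_free_replace _ _ E _ is_cap_plug); auto; solve_local.
Qed.

Lemma pure_upto_s5a D D' : s5a D D' -> pure_upto 4 D -> pure_upto 4 D'.
Proof.
  intros (X & E & E' & HX & (A & HE & ->) & -> & ->) ((((_ & H1) & H2) & H3) & H4).
  cbn [pure_upto purity_condition] in *.
  repeat split.
  - apply (atom_free_replace _ _ E); auto; destruct HE as [->| ->]; solve_local.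
  - apply (or_over_free_replace _ _ E _ is_and_plug); auto; destruct HE as [->| ->]; solve_local.
  - apply (or_over_free_replace _ _ E _ is_cap_plug); auto; destruct HE as [->| ->]; solve_local.
  - apply (clash_free_replace _ E); auto; destruct HE as [->| ->]; solve_local.
Qed.

Lemma pure_upto_s5b D D' : s5b D D' -> pure_upto 4 D -> pure_upto 4 D'.
Proof.
  intros (X & E & E' & HX & (A & HE & ->) & -> & ->) ((((_ & H1) & H2) & H3) & H4).
  cbn [pure_upto purity_condition] in *.
  (* Dropping ⊤ from A ∧ ⊤ would expose the disjuncts of A to an enclosing ∨;
     by clause (2) there is none. *)
  assert (HXa : and_ctx X).
  { apply (and_ctx_of_and_free X E); auto. destruct HE as [->| ->]; exact I. }
  repeat split.
  - apply (atom_free_replace _ _ E); auto; destruct HE as [->| ->]; solve_local.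
  - apply (or_over_free_replace _ _ E _ is_and_plug); auto; destruct HE as [->| ->]; solve_local.
  - apply (or_over_free_replace _ _ E _ is_cap_plug); auto; destruct HE as [->| ->]; solve_local.
  - intros HS. apply H4. revert HS. apply surf_replace_and_ctx; auto.
    + intros U V (p & [HP|[]] & _). discriminate.
    + destruct HE as [->| ->]; solve_local.
Qed.

Lemma pure_upto_s6 D D' : s6 D D' -> pure_upto 5 D -> pure_upto 5 D'.
Proof.
  intros (c & _ & X & E & E' & HX & (a & b & A & B & E1 & F1 & HE & ->) & -> & ->)
         (((((_ & H1) & H2) & H3) & H4) & H5).
  cbn [pure_upto purity_condition] in *.
  repeat split.
  - apply (atom_free_replace _ _ E); auto; subst E; solve_local.
  - apply (or_over_free_replace _ _ E _ is_and_plug); auto; subst E; solve_local.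
  - apply (or_over_free_replace _ _ E _ is_cap_plug); auto; subst E; solve_local.
  - apply (clash_free_replace _ E); auto; subst E; solve_local.
  - apply (atom_free_replace _ _ E); auto; subst E; solve_local.
Qed.

Lemma csize_surf_change_lt (pat : cirq -> cirq -> Prop) D D' :
  (forall E E', pat E E' -> csize E' < csize E) -> surf_change pat D D' -> csize D' < csize D.
Proof. intros H (X & E & E' & _ & Hp & -> & ->). apply csize_plug_lt; auto. Qed.

Lemma csize_surf_change_gt (pat : cirq -> cirq -> Prop) D D' :
  (forall E E', pat E E' -> csize E < csize E') -> surf_change pat D D' -> csize D < csize D'.
Proof. intros H (X & E & E' & _ & Hp & -> & ->). apply csize_plug_lt; auto. Qed.

Ltac solve_csize :=
  simpl;
  repeat match goal with
         | |- context [csize ?U] =>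
             is_var U;
             lazymatch goal with _ : 1 <= csize U |- _ => fail | _ => pose proof (csize_pos U) end
         end;
  lia.

Lemma csize_s1a D D' : s1a D D' -> csize D' < csize D.
Proof. apply csize_surf_change_lt. intros E E' (A & [-> | ->] & ->); solve_csize. Qed.

Lemma csize_s1b D D' : s1b D D' -> csize D' < csize D.
Proof. apply csize_surf_change_lt. intros E E' (A & [-> | ->] & ->); solve_csize. Qed.

Lemma csize_s2 D D' : s2 D D' -> csize D < csize D'.
Proof. apply csize_surf_change_gt. intros E E' (A & B & C & [-> | ->] & ->); solve_csize. Qed.

Lemma csize_s3 D D' : s3 D D' -> csize D < csize D'.
Proof. apply csize_surf_change_gt. intros E E' (c & A & B & C & [-> | ->] & ->); solve_csize. Qed.

Lemma clash_is_or E : clash E -> exists U V, E = COr U V.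
Proof.
  intros (p & HP & HN).
  destruct E; try (destruct HP as [HP|[]]; destruct HN as [HN|[]]; congruence). eauto.
Qed.

Lemma csize_s4 D D' : s4 D D' -> csize D' < csize D.
Proof.
  apply csize_surf_change_lt. intros E E' (HC & ->).
  destruct (clash_is_or E HC) as (U & V & ->). solve_csize.
Qed.

Lemma csize_s5a D D' : s5a D D' -> csize D' < csize D.
Proof. apply csize_surf_change_lt. intros E E' (A & [-> | ->] & ->); solve_csize. Qed.

Lemma csize_s5b D D' : s5b D D' -> csize D' < csize D.
Proof. apply csize_surf_change_lt. intros E E' (A & [-> | ->] & ->); solve_csize. Qed.

Lemma csize_s6 D D' : s6 D D' -> csize D < csize D'.
Proof.
  intros (c & _ & H). revert H. apply csize_surf_change_gt.
  intros E E' (a & b & A & B & E1 & F1 & -> & ->). unfold quad. solve_csize.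
Qed.

Lemma csize_s7 D D' : s7 D D' -> csize D' < csize D.
Proof.
  intros (X & c & E & F & A & [[-> ->]|[-> ->]]); simpl; apply -> Nat.succ_lt_mono.
  - apply Nat.add_lt_mono_r, csize_plug_lt. simpl. lia.
  - apply Nat.add_lt_mono_l, csize_plug_lt. simpl. lia.
Qed.

Lemma surf_atom_parent K D :
  D <> K -> surf (fun E => E = K) D ->
  surf (fun E => exists A, E = COr K A \/ E = COr A K) D \/
  surf (fun E => exists A, E = CAnd K A \/ E = CAnd A K) D.
Proof.
  induction D as [| | | |D1 IH1 D2 IH2|D1 IH1 D2 IH2| |]; intros Hne [Hs|Hs];
    try contradiction; simpl in Hs; try contradiction.
  - destruct Hs as [Hs|Hs].
    + destruct (classic (D1 = K)) as [->|E]; [left; apply surf_here; eauto|].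
      destruct (IH1 E Hs); [left|right]; simpl; auto.
    + destruct (classic (D2 = K)) as [->|E]; [left; apply surf_here; eauto|].
      destruct (IH2 E Hs); [left|right]; simpl; auto.
  - destruct Hs as [Hs|Hs].
    + destruct (classic (D1 = K)) as [->|E]; [right; apply surf_here; eauto|].
      destruct (IH1 E Hs); [left|right]; simpl; auto.
    + destruct (classic (D2 = K)) as [->|E]; [right; apply surf_here; eauto|].
      destruct (IH2 E Hs); [left|right]; simpl; auto.
Qed.

Lemma purity_of_stuck_s1 D :
  (forall D', ~ s1a D D') -> (forall D', ~ s1b D D') -> purity_condition 1 D.
Proof.
  intros N1 N2 Hne Hs.
  destruct (surf_atom_parent CBot D Hne Hs) as [H|H];
    apply surf_inv in H as (X & E & HX & -> & A & HA).
  - apply (N1 (plug X A)). exists X, E, A. repeat split; auto. exists A. auto.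
  - apply (N2 (plug X CBot)). exists X, E, CBot. repeat split; auto. exists A. auto.
Qed.

Definition and_or_redex (E : cirq) : Prop :=
  exists A B C, E = COr (CAnd A B) C \/ E = COr C (CAnd A B).

Lemma surf_and_under_or U V :
  surf is_and U -> surf and_or_redex (COr U V) /\ surf and_or_redex (COr V U).
Proof.
  revert V. induction U as [| | | |U1 IH1 U2 IH2|U1 IH1 U2 IH2| |]; intros V [H|H];
    try contradiction.
  - destruct H as [H|H]; [destruct (IH1 U2 H) as [K _] | destruct (IH2 U1 H) as [_ K]];
      split; auto using surf_or_l, surf_or_r.
  - split; apply surf_here; exists U1, U2, V; auto.
  - split; apply surf_here; exists U1, U2, V; auto.
Qed.

Lemma purity_of_stuck_s2 D : (forall D', ~ s2 D D') -> purity_condition 2 D.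
Proof.
  intros N Hs.
  assert (H : surf and_or_redex D).
  { apply (surf_surf _ _ D Hs). intros [| | | |U V| | |] HE; simpl in HE; try contradiction.
    destruct HE as [HE|HE];
      [exact (proj1 (surf_and_under_or U V HE)) | exact (proj2 (surf_and_under_or V U HE))]. }
  apply surf_inv in H as (X & E & HX & -> & A & B & C & HE).
  apply (N (plug X (CAnd (COr A C) (COr B C)))).
  exists X, E, (CAnd (COr A C) (COr B C)). repeat split; auto. exists A, B, C. auto.
Qed.

Definition cap_or_redex (E : cirq) : Prop :=
  exists c A B C, E = COr (CCap c A B) C \/ E = COr C (CCap c A B).

Lemma surf_cap_under_or U V :
  surf is_cap U ->
  (surf (or_over is_and) (COr U V) \/ surf cap_or_redex (COr U V)) /\
  (surf (or_over is_and) (COr V U) \/ surf cap_or_redex (COr V U)).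
Proof.
  revert V. induction U as [| | | |U1 IH1 U2 IH2|U1 IH1 U2 IH2|c U1 _ U2 _|]; intros V [H|H];
    try contradiction.
  - destruct H as [H|H];
      [destruct (IH1 U2 H) as [[K|K] _] | destruct (IH2 U1 H) as [_ [K|K]]];
      split; auto using surf_or_l, surf_or_r.
  - split; left; apply surf_here; simpl; auto.
  - split; right; apply surf_here; exists c, U1, U2, V; auto.
Qed.

Lemma purity_of_stuck_s3 D :
  (forall D', ~ s3 D D') -> purity_condition 2 D -> purity_condition 3 D.
Proof.
  intros N H2 Hs.
  assert (H : surf (fun E => surf (or_over is_and) E \/ surf cap_or_redex E) D).
  { apply (surf_surf _ _ D Hs). intros [| | | |U V| | |] HE; simpl in HE; try contradiction.
    apply surf_here.
    destruct HE as [HE|HE];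
      [exact (proj1 (surf_cap_under_or U V HE)) | exact (proj2 (surf_cap_under_or V U HE))]. }
  apply surf_inv in H as (X & E & HX & -> & [HE|HE]).
  - apply H2, surf_plug; auto.
  - apply surf_inv in HE as (Y & G & HY & -> & c & A & B & C & HG).
    apply (N (plug (ctx_comp X Y) (CCap c (COr A C) (COr B C)))).
    exists (ctx_comp X Y), G, (CCap c (COr A C) (COr B C)).
    rewrite plug_comp. repeat split; auto using surface_ctx_comp. exists c, A, B, C. auto.
Qed.

Lemma purity_of_stuck_s4 D : (forall D', ~ s4 D D') -> purity_condition 4 D.
Proof.
  intros N Hs. apply surf_inv in Hs as (X & E & HX & -> & HE).
  apply (N (plug X CTop)). exists X, E, CTop. auto.
Qed.

Lemma purity_of_stuck_s5 D :
  (forall D', ~ s5a D D') -> (forall D', ~ s5b D D') -> purity_condition 5 D.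
Proof.
  intros N1 N2 Hne Hs.
  destruct (surf_atom_parent CTop D Hne Hs) as [H|H];
    apply surf_inv in H as (X & E & HX & -> & A & HA).
  - apply (N1 (plug X CTop)). exists X, E, CTop. repeat split; auto. exists A. auto.
  - apply (N2 (plug X A)). exists X, E, A. repeat split; auto. exists A. auto.
Qed.

Lemma conj_all_cap_surf B :
  conj_all_cap B ->
  is_cap B \/ surf (fun E => exists a b A B E1 F1, E = CAnd (CCap a A B) (CCap b E1 F1)) B.
Proof.
  induction B as [| | | |B1 IH1 B2 IH2|B1 IH1 B2 IH2|a A1 _ A2 _|]; simpl; intros H;
    try contradiction; auto.
  destruct H as [H1 H2]. right.
  destruct (IH1 H1) as [K1|K1]; [destruct (IH2 H2) as [K2|K2]|]; simpl; auto.
  left. destruct B1, B2; try contradiction. do 6 eexists; reflexivity.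
Qed.

Lemma purity_of_stuck_s6 D : (forall D', ~ s6 D D') -> purity_condition 6 D.
Proof.
  intros N A B -> [HA HB].
  assert (H : surf (fun E => exists a b A B E1 F1, E = CAnd (CCap a A B) (CCap b E1 F1))
                   (CAnd A B)).
  { destruct (conj_all_cap_surf A HA) as [K1|K1]; [destruct (conj_all_cap_surf B HB) as [K2|K2]|];
      simpl; auto.
    left. destruct A, B; try contradiction. do 6 eexists; reflexivity. }
  destruct (exists_fresh_conj (CAnd A B)) as [c Hc].
  apply surf_inv in H as (X & E & HX & HD & a & b & A1 & B1 & E1 & F1 & ->).
  apply (N (plug X (quad a b c A1 B1 E1 F1))). exists c. split; [exact Hc|].
  exists X, (CAnd (CCap a A1 B1) (CCap b E1 F1)), (quad a b c A1 B1 E1 F1).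
  repeat split; auto. do 6 eexists. split; reflexivity.
Qed.

Lemma purity_of_stuck_s7 D : (forall D', ~ s7 D D') -> purity_condition 7 D.
Proof.
  intros N c A B ->. split; intros H; apply occurs_cap_inv in H as (X & E & F & ->).
  - apply (N (CCap c (plug X E) B)). exists X, c, E, F, B. left; auto.
  - apply (N (CCap c A (plug X F))). exists X, c, E, F, A. right; auto.
Qed.

Lemma loop_last (it : cirq -> cirq -> Prop) D D' : loop it D D' -> it D' D'.
Proof. induction 1; auto. Qed.

Lemma loop_invariant (it : cirq -> cirq -> Prop) (I : cirq -> Prop) :
  (forall D D', it D D' -> I D -> I D') -> forall D D', loop it D D' -> I D -> I D'.
Proof. intros H D D'. induction 1; eauto. Qed.

Lemma opt_invariant (s : cirq -> cirq -> Prop) (I : cirq -> Prop) :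
  (forall D D', s D D' -> I D -> I D') -> forall D D', opt s D D' -> I D -> I D'.
Proof. intros H D D' [K|[_ ->]]; eauto. Qed.

Lemma opt_self_stuck (s : cirq -> cirq -> Prop) D :
  (forall D D', s D D' -> csize D' <> csize D) -> opt s D D -> forall D', ~ s D D'.
Proof. intros H [K|[K _]]; [exfalso; exact (H D D K eq_refl) | exact K]. Qed.

Lemma iter2_self_stuck (s t : cirq -> cirq -> Prop) D :
  (forall D D', s D D' -> csize D' < csize D) -> (forall D D', t D D' -> csize D' < csize D) ->
  iter2 s t D D -> (forall D', ~ s D D') /\ (forall D', ~ t D D').
Proof.
  intros Hs Ht (D1 & [K1|[K1 ->]] & o2).
  - exfalso. pose proof (Hs _ _ K1).
    destruct o2 as [K2|[_ ->]]; [pose proof (Ht _ _ K2)|]; lia.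
  - split; [exact K1|]. destruct o2 as [K2|[K2 _]]; [pose proof (Ht _ _ K2); lia | exact K2].
Qed.

Lemma stage_opt_pure_upto (s : cirq -> cirq -> Prop) n :
  (forall D D', s D D' -> csize D' <> csize D) ->
  (forall D D', s D D' -> pure_upto n D -> pure_upto n D') ->
  (forall D, (forall D', ~ s D D') -> pure_upto n D -> purity_condition (S n) D) ->
  forall D D', loop (opt s) D D' -> pure_upto n D -> pure_upto (S n) D'.
Proof.
  intros Hsize Hpres Hstuck D D' HL HD.
  assert (HD' : pure_upto n D') by exact (loop_invariant _ _ (opt_invariant _ _ Hpres) _ _ HL HD).
  split; [exact HD'|]. apply Hstuck; [|exact HD'].
  exact (opt_self_stuck s D' Hsize (loop_last _ _ _ HL)).
Qed.

Lemma stage_iter2_pure_upto (s t : cirq -> cirq -> Prop) n :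
  (forall D D', s D D' -> csize D' < csize D) -> (forall D D', t D D' -> csize D' < csize D) ->
  (forall D D', s D D' -> pure_upto n D -> pure_upto n D') ->
  (forall D D', t D D' -> pure_upto n D -> pure_upto n D') ->
  (forall D, (forall D', ~ s D D') -> (forall D', ~ t D D') -> purity_condition (S n) D) ->
  forall D D', loop (iter2 s t) D D' -> pure_upto n D -> pure_upto (S n) D'.
Proof.
  intros Hs Ht Ps Pt Hstuck D D' HL HD.
  assert (Hit : forall D D', iter2 s t D D' -> pure_upto n D -> pure_upto n D').
  { intros D1 D2 (D3 & o1 & o2) H.
    exact (opt_invariant _ _ Pt _ _ o2 (opt_invariant _ _ Ps _ _ o1 H)). }
  split; [exact (loop_invariant _ _ Hit _ _ HL HD)|].
  destruct (iter2_self_stuck s t D' Hs Ht (loop_last _ _ _ HL)). auto.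
Qed.

Lemma stage7_shape D B : loop (opt s7) D B -> B = D \/ is_cap B.
Proof.
  induction 1 as [|D D1 D2 [K|[_ ->]] Hne _ IH]; auto; try congruence.
  right. destruct K as (X & c & E & F & A & [[-> ->]|[-> ->]]);
    destruct IH as [->|K]; simpl; auto.
Qed.

Lemma pure_upto_cap B : is_cap B -> purity_condition 7 B -> pure_upto 7 B.
Proof.
  destruct B as [| | | | | |c B1 B2|]; try contradiction. intros _ H7.
  refine (conj (conj (conj (conj (conj (conj (conj I _) _) _) _) _) _) H7).
  - intros _ [K|[]]. discriminate.
  - intros [[]|[]].
  - intros [[]|[]].
  - intros [(p & [K|[]] & _)|[]]. discriminate.
  - intros _ [K|[]]. discriminate.
  - intros A B K. discriminate.
Qed.

Lemma purification_pure A B : purification A B -> pure B.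
Proof.
  intros (D1 & D2 & D3 & D4 & D5 & D6 & L1 & L2 & L3 & L4 & L5 & L6 & L7).
  apply pure_of_pure_upto.
  assert (P1 : pure_upto 1 D1).
  { refine (stage_iter2_pure_upto s1a s1b 0 csize_s1a csize_s1b _ _ _ _ _ L1 I); auto.
    intros D N1 N2. apply purity_of_stuck_s1; auto. }
  assert (P2 : pure_upto 2 D2).
  { refine (stage_opt_pure_upto s2 1 _ pure_upto_s2 _ _ _ L2 P1).
    - intros D D' K. pose proof (csize_s2 _ _ K). lia.
    - intros D N _. apply purity_of_stuck_s2, N. }
  assert (P3 : pure_upto 3 D3).
  { refine (stage_opt_pure_upto s3 2 _ pure_upto_s3 _ _ _ L3 P2).
    - intros D D' K. pose proof (csize_s3 _ _ K). lia.
    - intros D N [_ H2]. apply purity_of_stuck_s3; auto. }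
  assert (P4 : pure_upto 4 D4).
  { refine (stage_opt_pure_upto s4 3 _ pure_upto_s4 _ _ _ L4 P3).
    - intros D D' K. pose proof (csize_s4 _ _ K). lia.
    - intros D N _. apply purity_of_stuck_s4, N. }
  assert (P5 : pure_upto 5 D5).
  { refine (stage_iter2_pure_upto s5a s5b 4 csize_s5a csize_s5b pure_upto_s5a pure_upto_s5b
              _ _ _ L5 P4).
    intros D N1 N2. apply purity_of_stuck_s5; auto. }
  assert (P6 : pure_upto 6 D6).
  { refine (stage_opt_pure_upto s6 5 _ pure_upto_s6 _ _ _ L6 P5).
    - intros D D' K. pose proof (csize_s6 _ _ K). lia.
    - intros D N _. apply purity_of_stuck_s6, N. }
  assert (N7 : purity_condition 7 B).
  { apply purity_of_stuck_s7, (opt_self_stuck s7); [|exact (loop_last _ _ _ L7)].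
    intros D D' K. pose proof (csize_s7 _ _ K). lia. }
  destruct (stage7_shape _ _ L7) as [->|HB]; [exact (conj P6 N7) | exact (pure_upto_cap B HB N7)].
Qed.

Theorem lemma7p5 (A B : cirq) :
  purification A B ->
  (provable B -> provable A) /\ (valid A <-> valid B) /\ pure B /\ rank B <= rank A.
Proof.
  intros HAB.
  destruct (purification_faithful A B HAB) as (HP & HV & HR).
  exact (conj HP (conj HV (conj (purification_pure A B HAB) HR))).
Qed.
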